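(* Let $t_1,\dots,t_N\in\mathbb{C}$ be pairwise distinct, let $B_1,\dots,B_N$ be constant complex $M\times M$ matrices, and let $y$ be a $\mathbb{C}^M$-valued function satisfying $D_xy=\sum_{i=1}^N\frac{B_i}{x-t_i}\,y$. Put $Y_0={}^{\mathrm T}\!\left[\frac{y}{x-t_1},\dots,\frac{y}{x-t_N}\right]\in\mathbb{C}^{MN}$. Then $Y_0$ satisfies the $q$-Okubo type system $$\Big(xI-\tfrac{1}{q}S\Big)D_xY_0=\tfrac1q(B-I)Y_0,$$ where $S=\mathrm{diag}(t_1I_M,\dots,t_NI_M)$ (block diagonal, $MN\times MN$) and $B$ is the $MN\times MN$ block matrix all of whose $N$ block rows equal $[B_1\ B_2\ \cdots\ B_N]$.
   Context: Fix $q\in\mathbb{C}$ with $0<|q|<1$. $D_xf(x)=\frac{f(x)-f(qx)}{(1-q)x}$, applied componentwise to vector-valued functions. $I$ denotes the identity matrix of the appropriate size. *)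

From HB Require Import structures.
From mathcomp Require Import all_boot all_order all_algebra.
From mathcomp Require Import reals complex.
Set Implicit Arguments. Unset Strict Implicit. Unset Printing Implicit Defensive.
Import Order.TTheory GRing.Theory Num.Theory.
Local Open Scope ring_scope.

Definition Cplx (R : realType) := R[i].

Definition qD (C : fieldType) (q : C) (m n : nat) (f : C -> 'M[C]_(m, n)) (x : C)
  : 'M[C]_(m, n) := ((1 - q) * x)^-1 *: (f x - f (q * x)).

From HB Require Import structures.
From mathcomp Require Import all_boot all_order all_algebra.
From mathcomp Require Import reals complex.
From mathcomp Require Import ring.
Import Order.TTheory GRing.Theory Num.Theory.
Local Open Scope ring_scope.

(* The system decouples into one identity per block. Writing Y_i = y / (x - t_i),
   block i of B Y0 is sum_j B_j y / (x - t_j) = D_q y, and block i of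
   (x - S/q) D_q Y0 is (q x - t_i)/q * D_q Y_i. The q-Leibniz rule
   D_q (f g) = g(q x) D_q f + f D_q g with D_q (x - t)^-1 = -((x - t)(q x - t))^-1
   turns the latter into (D_q y - Y_i)/q, which is block i of (B - I) Y0 / q. *)

Lemma mxcolZ (C : pzRingType) (N m : nat) (p_ : 'I_N -> nat) (a : C)
    (A_ : forall i, 'M[C]_(p_ i, m)) :
  a *: \mxcol_i A_ i = \mxcol_i (a *: A_ i).
Proof. by apply/matrixP => s j; rewrite !mxE. Qed.

Section QDerivative.

Variables (C : fieldType) (q : C).

Lemma qD_mxcol (N m : nat) (p_ : 'I_N -> nat) (F_ : forall i, C -> 'M[C]_(p_ i, m))
    (x : C) :
  qD q (fun z => \mxcol_i F_ i z) x = \mxcol_i qD q (F_ i) x.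
Proof. by rewrite /qD -mxcolB mxcolZ. Qed.

Lemma qD_scale_inv_shift (m n : nat) (f : C -> 'M[C]_(m, n)) (t x : C) :
    q != 0 -> 1 - q != 0 -> x != 0 -> x != t -> q * x != t ->
  (x - q^-1 * t) *: qD q (fun z => (z - t)^-1 *: f z) x
    = q^-1 *: (qD q f x - (x - t)^-1 *: f x).
Proof.
move=> q0 q1 x0 xt qxt; apply/matrixP => a b; rewrite !mxE.
have xt0 : x - t != 0 by rewrite subr_eq0.
have qxt0 : q * x - t != 0 by rewrite subr_eq0.
by field; rewrite q0 q1 x0 xt0 qxt0.
Qed.

End QDerivative.

Lemma mul_shifted_mxdiag_mxcol (C : comPzRingType) (N m : nat) (p_ : 'I_N -> nat)
    (x c : C) (t : 'I_N -> C) (A_ : forall i, 'M[C]_(p_ i, m)) :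
  (x *: 1%:M - c *: \mxdiag_i (t i)%:M) *m \mxcol_i A_ i
    = \mxcol_i ((x - c * t i) *: A_ i).
Proof.
rewrite mulmxBl -!scalemxAl mul1mx mul_mxdiag_mxcol !mxcolZ -mxcolB.
by apply: eq_mxcol => i; rewrite mul_scalar_mx scalerA scalerBl.
Qed.

Lemma mul_mxblock_const_rows_mxcol (C : pzRingType) (N n m : nat)
    (B_ : 'I_N -> 'M[C]_n) (A_ : 'I_N -> 'M[C]_(n, m)) :
  (\mxblock_(i < N, j < N) B_ j) *m \mxcol_j A_ j
    = \mxcol_(i < N) \sum_j B_ j *m A_ j.
Proof. by rewrite mxblockEv mxcol_mul; apply: eq_mxcol => i; rewrite mul_mxrow_mxcol. Qed.

Theorem mainTheorem2 (R : realType) (q : Cplx R) (M N : nat)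
  (t : 'I_N -> Cplx R) (Bs : 'I_N -> 'M[Cplx R]_M) (y : Cplx R -> 'cV[Cplx R]_M) :
  0 < `|q| -> `|q| < 1 ->
  injective t ->
  (forall x : Cplx R, x != 0 -> (forall i, x != t i) -> (forall i, q * x != t i) ->
     qD q y x = \sum_(i < N) ((x - t i)^-1 *: Bs i) *m y x) ->
  let Y0 : Cplx R -> 'cV[Cplx R]_(\sum_(i < N) M) :=
    fun x => \mxcol_(i < N) ((x - t i)^-1 *: y x) in
  let S : 'M[Cplx R]_(\sum_(i < N) M) := \mxdiag_(i < N) (t i)%:M in
  let B : 'M[Cplx R]_(\sum_(i < N) M) := \mxblock_(i < N, j < N) Bs j in
  forall x : Cplx R, x != 0 -> (forall i, x != t i) -> (forall i, q * x != t i) ->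
    (x *: 1%:M - q^-1 *: S) *m qD q Y0 x = q^-1 *: ((B - 1%:M) *m Y0 x).
Proof.
move=> q_gt0 q_lt1 _ hy Y0 S B x x0 xt qxt.
have q0 : q != 0 by rewrite -normr_gt0.
have q1 : 1 - q != 0.
  by rewrite subr_eq0; apply: contraTneq q_lt1 => <-; rewrite normr1 ltxx.
have By : B *m Y0 x = \mxcol_(i < N) qD q y x.
  rewrite mul_mxblock_const_rows_mxcol; apply: eq_mxcol => i.
  by rewrite hy //; apply: eq_bigr => j _; rewrite -scalemxAr scalemxAl.
rewrite qD_mxcol mul_shifted_mxdiag_mxcol mulmxBl mul1mx By -mxcolB mxcolZ.
by apply: eq_mxcol => i; rewrite qD_scale_inv_shift.
Qed.
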